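(* Consider a fair execution of Algorithm DLE from a permitted initial configuration $C_0$, and let $l$ be the point occupied by the elected leader when the algorithm terminates. When Algorithm DLE terminates, for every $i\in\{0,\dots,\epsilon_G(l)\}$ there exists a contracted particle occupying a point at grid distance $i$ from $l$; moreover, no particle occupies a point at grid distance greater than $\epsilon_G(l)$ from $l$.
   Context: Geometry. The triangular grid $G$ has as vertices (''points'') the points of the regular triangular lattice in the plane, adjacent iff at unit distance; each point has six incident edges, cyclically ordered clockwise. The grid distance $dist_G(u,v)$ is the shortest-path distance in $G$. A shape is a finite set of points (identified with its induced subgraph). For a connected shape $S$: the unbounded face is the outer face; a bounded face containing a grid point not in $S$ is a hole; the area of $S$ is $S$ with its hole points; the outer boundary is the set of points of $S$ on the boundary of the outer face; a boundary point is a point of $S$ adjacent to a point not in $S$. For a boundary point $v$, a local boundary $B$ of $v$ w.r.t. $S$ is a maximal clockwise cyclic interval of consecutive edges at $v$ leading to points not in $S$, with boundary count $c(v,B)=|B|-2$. $v$ is redundant if its neighbors in $S$ induce a connected subgraph; erodable if redundant and on the outer boundary (it then has a single local boundary $B$); SCE if erodable and $c(v,B)>0$. Model (amoebot, strong scheduler). Anonymous constant-memory particles each occupy one point (contracted) or two adjacent points (expanded; head and tail); no point is occupied twice. Ports $0,\dots,5$, common clockwise chirality, particles know neighbors' port numbers for common edges, read/write neighbors' memories. Moves: expansion into an adjacent empty point (new head), contraction, handover. Executions are sequences of atomic activations of single particles (read, compute, write, at most one move); fair if every particle is activated infinitely often. Permitted initial configuration $C_0$: all particles contracted, nonempty connected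 set $S_P(C_0)$ of occupied points; each particle knows for each port whether the adjacent point lies in the outer face of $S_P(C_0)$. The system's shape may become disconnected. Algorithm DLE. Maintains eligible set $S_e$, initially the area of $S_P(C_0)$; points are only removed. Particle $p$ has $status$ (initially $undecided$) and $eligible[0..5]$ (initially true iff the adjacent point is not in the outer face of $S_P(C_0)$). On activation: if expanded, contract into head; else if $p$ and all neighbors are decided, terminate; else if undecided and contracted at $v$: if no neighbor of $v$ is in $S_e$ (per $eligible$), become $leader$; else if $v$ is SCE w.r.t. $S_e$, remove $v$ from $S_e$ (neighbors whose head is adjacent to $v$ update their $eligible$ entry for $v$ to false), then if $v$ has an adjacent unoccupied point $u\in S_e$, set own $eligible$ entries to true except the one pointing from $u$ to $v$ (false) and expand into $u$, otherwise become $follower$. In any fair execution $S_e$ eventually equals a single point $l$, occupied by the unique leader. $\epsilon_G(l)=\max_{u\in S_P(C_0)} dist_G(l,u)$ is the eccentricity of $l$ w.r.t. $G$ in $C_0$. *)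

From Stdlib Require Import ZArith Arith.
Open Scope Z_scope.

(* Points of the regular triangular lattice in axial coordinates:
   (a,b) is the plane point a*(1,0) + b*(1/2, sqrt 3 / 2). *)
Definition Point : Type := (Z * Z)%type.

Definition padd (x y : Point) : Point := (fst x + fst y, snd x + snd y).

Definition peqb (x y : Point) : bool := Z.eqb (fst x) (fst y) && Z.eqb (snd x) (snd y).

(* The six unit vectors, listed in clockwise cyclic order (index taken mod 6). *)
Definition dvec (d : nat) : Point :=
  match Nat.modulo d 6 with
  | 0%nat => (1, 0)
  | 1%nat => (1, -1)
  | 2%nat => (0, -1)
  | 3%nat => (-1, 0)
  | 4%nat => (-1, 1)
  | _ => (0, 1)
  end.

Definition nbr (v : Point) (d : nat) : Point := padd v (dvec d).

Definition adj (x y : Point) : Prop := exists d, (d < 6)%nat /\ y = nbr x d.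

Inductive walk : Point -> Point -> nat -> Prop :=
| walk_nil : forall x, walk x x 0
| walk_cons : forall x y z n, adj x y -> walk y z n -> walk x z (S n).

Definition is_dist (u v : Point) (d : nat) : Prop :=
  walk u v d /\ forall d', walk u v d' -> (d <= d')%nat.

Definition shape := Point -> Prop.

Definition finite_shape (S : shape) : Prop :=
  exists l : list Point, forall x, S x -> List.In x l.

Inductive path_in (S : shape) : Point -> Point -> Prop :=
| path_in_refl : forall x, S x -> path_in S x x
| path_in_step : forall x y z, S x -> adj x y -> path_in S y z -> path_in S x z.

Definition connected (S : shape) : Prop :=
  forall x y, S x -> S y -> path_in S x y.

Definition pnorm (x : Point) : Z := Z.abs (fst x) + Z.abs (snd x).

(* q lies in the outer (unbounded) face of S: q is not in S and q can be
   joined, avoiding S, to grid points arbitrarily far away. *)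
Definition in_outer_face (S : shape) (q : Point) : Prop :=
  ~ S q /\ forall n : Z, exists r, path_in (fun x => ~ S x) q r /\ n <= pnorm r.

(* area of S: S together with its hole points (points not in S that lie in a
   bounded face) *)
Definition area (S : shape) : shape :=
  fun x => S x \/ (~ S x /\ ~ in_outer_face S x).

Definition outer_boundary (S : shape) (v : Point) : Prop :=
  S v /\ exists d, (d < 6)%nat /\ in_outer_face S (nbr v d).

Definition boundary_point (S : shape) (v : Point) : Prop :=
  S v /\ exists d, (d < 6)%nat /\ ~ S (nbr v d).

(* local boundary of v w.r.t. S: the maximal clockwise cyclic interval of the
   k consecutive edges at v in directions i, i+1, ..., i+k-1 (mod 6), all
   leading to points not in S.  Its boundary count is k - 2. *)
Definition local_boundary (S : shape) (v : Point) (i k : nat) : Prop :=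
  (i < 6)%nat /\ (1 <= k <= 6)%nat /\
  (forall j, (j < k)%nat -> ~ S (nbr v (i + j))) /\
  ((k < 6)%nat -> S (nbr v (i + 5)) /\ S (nbr v (i + k))).

Definition redundant (S : shape) (v : Point) : Prop :=
  connected (fun x => S x /\ adj v x).

Definition erodable (S : shape) (v : Point) : Prop :=
  boundary_point S v /\ redundant S v /\ outer_boundary S v.

(* strictly convex erodable: erodable with boundary count c(v,B) = |B|-2 > 0 *)
Definition SCE (S : shape) (v : Point) : Prop :=
  erodable S v /\ exists i k, local_boundary S v i k /\ (3 <= k)%nat.

Inductive Status := Undecided | Leader | Follower.

(* State of a particle.  [ps_tail = None] means contracted (occupying
   [ps_head]); [Some t] means expanded with head [ps_head] and tail t.
   [ps_elig d] is the eligible entry for the port leading from the head to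
   [nbr ps_head d] (ports are indexed by global direction; since all particles
   share chirality this is just a fixed relabelling of each particle's ports).
   [ps_term] records that the particle has terminated. *)
Record PState := mkPS {
  ps_head : Point;
  ps_tail : option Point;
  ps_status : Status;
  ps_elig : nat -> bool;
  ps_term : bool }.

(* A configuration, together with the (ghost) eligible set S_e. *)
Record Config (Part : Type) := mkC {
  cf_st : Part -> PState;
  cf_Se : shape }.
Arguments mkC {Part}.
Arguments cf_st {Part}.
Arguments cf_Se {Part}.

Definition occupies (s : PState) (x : Point) : Prop :=
  ps_head s = x \/ ps_tail s = Some x.

Definition occupied {Part : Type} (c : Config Part) : shape :=
  fun x => exists q, occupies (cf_st c q) x.

Definition decided (s : PState) : Prop := ps_status s <> Undecided.

Definition pneighbor {Part : Type} (c : Config Part) (p q : Part) : Prop :=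
  q <> p /\ exists x y, occupies (cf_st c p) x /\ occupies (cf_st c q) y /\ adj x y.

Definition others_same {Part : Type} (c c' : Config Part) (p : Part) : Prop :=
  forall q, q <> p -> cf_st c' q = cf_st c q.

Definition same_Se {Part : Type} (c c' : Config Part) : Prop :=
  forall x, cf_Se c' x <-> cf_Se c x.

Definition forget_point (v : Point) (s : PState) : PState :=
  mkPS (ps_head s) (ps_tail s) (ps_status s)
       (fun d => if peqb (nbr (ps_head s) d) v then false else ps_elig s d)
       (ps_term s).

Inductive dle_step {Part : Type} (c : Config Part) (p : Part) (c' : Config Part) : Prop :=
| st_terminated :
    ps_term (cf_st c p) = true -> c' = c -> dle_step c p c'
| st_contract : forall t,
    ps_term (cf_st c p) = false ->
    ps_tail (cf_st c p) = Some t ->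
    others_same c c' p -> same_Se c c' ->
    cf_st c' p = mkPS (ps_head (cf_st c p)) None (ps_status (cf_st c p))
                      (ps_elig (cf_st c p)) false ->
    dle_step c p c'
| st_finish :
    ps_term (cf_st c p) = false ->
    ps_tail (cf_st c p) = None ->
    decided (cf_st c p) ->
    (forall q, pneighbor c p q -> decided (cf_st c q)) ->
    others_same c c' p -> same_Se c c' ->
    cf_st c' p = mkPS (ps_head (cf_st c p)) None (ps_status (cf_st c p))
                      (ps_elig (cf_st c p)) true ->
    dle_step c p c'
| st_wait :
    ps_term (cf_st c p) = false ->
    ps_tail (cf_st c p) = None ->
    decided (cf_st c p) ->
    ~ (forall q, pneighbor c p q -> decided (cf_st c q)) ->
    c' = c -> dle_step c p c'
(* undecided, contracted at v, no neighbour of v in S_e (per eligible):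
   become leader *)
| st_leader :
    ps_term (cf_st c p) = false ->
    ps_tail (cf_st c p) = None ->
    ps_status (cf_st c p) = Undecided ->
    (forall d, (d < 6)%nat -> ps_elig (cf_st c p) d = false) ->
    others_same c c' p -> same_Se c c' ->
    cf_st c' p = mkPS (ps_head (cf_st c p)) None Leader
                      (ps_elig (cf_st c p)) false ->
    dle_step c p c'
| st_move : forall u,
    let v := ps_head (cf_st c p) in
    ps_term (cf_st c p) = false ->
    ps_tail (cf_st c p) = None ->
    ps_status (cf_st c p) = Undecided ->
    (exists d, (d < 6)%nat /\ ps_elig (cf_st c p) d = true) ->
    SCE (cf_Se c) v ->
    (forall x, cf_Se c' x <-> (cf_Se c x /\ x <> v)) ->
    adj v u -> ~ occupied c u -> cf_Se c' u ->
    (forall q, q <> p -> cf_st c' q = forget_point v (cf_st c q)) ->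
    cf_st c' p = mkPS u (Some v) Undecided
                      (fun d => negb (peqb (nbr u d) v)) false ->
    dle_step c p c'
| st_follower :
    let v := ps_head (cf_st c p) in
    ps_term (cf_st c p) = false ->
    ps_tail (cf_st c p) = None ->
    ps_status (cf_st c p) = Undecided ->
    (exists d, (d < 6)%nat /\ ps_elig (cf_st c p) d = true) ->
    SCE (cf_Se c) v ->
    (forall x, cf_Se c' x <-> (cf_Se c x /\ x <> v)) ->
    ~ (exists u, adj v u /\ ~ occupied c u /\ cf_Se c' u) ->
    (forall q, q <> p -> cf_st c' q = forget_point v (cf_st c q)) ->
    cf_st c' p = forget_point v (mkPS v None Follower (ps_elig (cf_st c p)) false) ->
    dle_step c p c'
| st_idle :
    ps_term (cf_st c p) = false ->
    ps_tail (cf_st c p) = None ->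
    ps_status (cf_st c p) = Undecided ->
    (exists d, (d < 6)%nat /\ ps_elig (cf_st c p) d = true) ->
    ~ SCE (cf_Se c) (ps_head (cf_st c p)) ->
    c' = c -> dle_step c p c'.

Definition dle_initial {Part : Type} (c0 : Config Part) : Prop :=
  let S0 := occupied c0 in
  (forall p, ps_tail (cf_st c0 p) = None /\ ps_status (cf_st c0 p) = Undecided
             /\ ps_term (cf_st c0 p) = false) /\
  (forall p q, ps_head (cf_st c0 p) = ps_head (cf_st c0 q) -> p = q) /\
  (exists x, S0 x) /\ finite_shape S0 /\ connected S0 /\
  (forall p d, ps_elig (cf_st c0 p) d = true <-> ~ in_outer_face S0 (nbr (ps_head (cf_st c0 p)) d)) /\
  (forall x, cf_Se c0 x <-> area S0 x).

Definition dle_execution {Part : Type} (c : nat -> Config Part) (a : nat -> Part) : Prop :=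
  forall n, dle_step (c n) (a n) (c (S n)).

Definition fair {Part : Type} (a : nat -> Part) : Prop :=
  forall p n, exists m, (n <= m)%nat /\ a m = p.

Definition terminated {Part : Type} (c : Config Part) : Prop :=
  forall p, ps_term (cf_st c p) = true.

Definition eccentricity (S : shape) (l : Point) (e : nat) : Prop :=
  (exists u, S u /\ is_dist l u e) /\
  (forall u d, S u -> is_dist l u d -> (d <= e)%nat).

From Stdlib Require Import ZArith Arith Lia Classical Wf_nat.

(* Everything rests on an invariant of DLE: occupied points and S_e stay in
   the area A of the initial shape, S_e stays connected, tails lie outside
   S_e, and every unoccupied point of S_e has all six neighbours in S_e.

   No particle is beyond distance e from l: a point farther out walks off to
   infinity along a ray avoiding the initial shape, so it lies in the outer
   face and not in A.

   For 0 < i <= e, S_e initially has a point at distance >= i from l and has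
   shrunk to {l} when l is elected.  Look at the step after which S_e first
   lies in the open ball of radius i.  It removed the SCE point v, the last
   point at distance >= i, and by connectivity v is at distance exactly i.
   The particle at v cannot have expanded into a neighbour u of S_e: u would
   be unoccupied, hence surrounded by S_e, yet u lies inside the ball and
   has two neighbours at distance i.  So it became a follower at v and never
   moves again. *)

Ltac destruct_dir d := destruct d as [|[|[|[|[|[|d]]]]]]; try lia.

(** * Grid distance *)

(* In axial coordinates the grid distance is max(|da|, |db|, |da + db|). *)
Definition hexdist (x y : Point) : Z :=
  Z.max (Z.abs (fst y - fst x))
        (Z.max (Z.abs (snd y - snd x)) (Z.abs (fst y - fst x + (snd y - snd x)))).

Lemma nbr_mod6 x d : nbr x (d mod 6) = nbr x d.
Proof. unfold nbr, dvec. now rewrite Nat.Div0.mod_mod. Qed.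

Lemma adj_nbr x d : adj x (nbr x d).
Proof.
  exists (d mod 6)%nat. split.
  - apply Nat.mod_upper_bound; lia.
  - now rewrite nbr_mod6.
Qed.

Lemma nbr_opposite x d : (d < 6)%nat -> nbr (nbr x d) (d + 3) = x.
Proof.
  destruct x as [x1 x2]; intros Hd.
  destruct_dir d; unfold nbr, padd, dvec; simpl; f_equal; lia.
Qed.

Lemma adj_sym x y : adj x y -> adj y x.
Proof. intros [d [Hd ->]]. rewrite <- (nbr_opposite x d Hd) at 2. apply adj_nbr. Qed.

Lemma adj_irrefl x : ~ adj x x.
Proof.
  destruct x as [x1 x2]; intros [d [Hd H]].
  destruct_dir d; unfold nbr, padd, dvec in H; simpl in H; injection H; lia.
Qed.

Lemma nbr_inj u d1 d2 : (d1 < 6)%nat -> (d2 < 6)%nat -> nbr u d1 = nbr u d2 -> d1 = d2.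
Proof.
  destruct u as [u1 u2]; intros H1 H2 E.
  destruct_dir d1; destruct_dir d2; unfold nbr, padd, dvec in E; simpl in E; injection E; lia.
Qed.

Lemma nbr_nbr_succ v d : (d < 6)%nat -> nbr (nbr v d) (d + 2) = nbr v (d + 1).
Proof.
  destruct v as [v1 v2]; intros Hd.
  destruct_dir d; unfold nbr, padd, dvec; simpl; f_equal; lia.
Qed.

Lemma nbr_nbr_pred v d : (d < 6)%nat -> nbr (nbr v d) (d + 4) = nbr v (d + 5).
Proof.
  destruct v as [v1 v2]; intros Hd.
  destruct_dir d; unfold nbr, padd, dvec; simpl; f_equal; lia.
Qed.

Lemma hexdist_sym x y : hexdist x y = hexdist y x.
Proof. destruct x, y; unfold hexdist; simpl; lia. Qed.

Lemma hexdist_ge0 x y : (0 <= hexdist x y)%Z.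
Proof. destruct x, y; unfold hexdist; simpl; lia. Qed.

Lemma hexdist_refl x : hexdist x x = 0%Z.
Proof. destruct x; unfold hexdist; simpl; lia. Qed.

Lemma hexdist_eq0 x y : hexdist x y = 0%Z -> x = y.
Proof. destruct x, y; unfold hexdist; simpl; intros; f_equal; lia. Qed.

Lemma hexdist_adj l x y : adj x y -> (Z.abs (hexdist l y - hexdist l x) <= 1)%Z.
Proof.
  destruct l, x; intros [d [Hd ->]].
  destruct_dir d; unfold hexdist, nbr, padd, dvec; simpl; lia.
Qed.

Lemma hexdist_closer x y : (0 < hexdist x y)%Z ->
  exists d, (d < 6)%nat /\ hexdist (nbr x d) y = (hexdist x y - 1)%Z.
Proof.
  destruct x as [a1 a2], y as [b1 b2]; unfold hexdist; simpl; intros H.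
  assert (   (b1 - a1 > 0 /\ b2 - a2 >= 0)
          \/ (b1 - a1 > 0 /\ b2 - a2 < 0 /\ b1 - a1 + (b2 - a2) >= 0)
          \/ (b1 - a1 >= 0 /\ b2 - a2 < 0 /\ b1 - a1 + (b2 - a2) < 0)
          \/ (b1 - a1 < 0 /\ b2 - a2 <= 0)
          \/ (b1 - a1 < 0 /\ b2 - a2 > 0 /\ b1 - a1 + (b2 - a2) <= 0)
          \/ (b1 - a1 <= 0 /\ b2 - a2 > 0 /\ b1 - a1 + (b2 - a2) > 0))%Z
    as [C|[C|[C|[C|[C|C]]]]] by lia;
  [exists 0%nat|exists 1%nat|exists 2%nat|exists 3%nat|exists 4%nat|exists 5%nat];
  unfold nbr, padd, dvec; simpl; split; lia.
Qed.

Lemma hexdist_two_farther l u : exists d1 d2,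
  (d1 < 6)%nat /\ (d2 < 6)%nat /\ d1 <> d2 /\
  hexdist l (nbr u d1) = (hexdist l u + 1)%Z /\ hexdist l (nbr u d2) = (hexdist l u + 1)%Z.
Proof.
  destruct l as [a1 a2], u as [b1 b2]; unfold hexdist; simpl.
  assert (   (b1 - a1 >= 0 /\ b2 - a2 >= 0)
          \/ (b1 - a1 > 0 /\ b2 - a2 < 0 /\ b1 - a1 + (b2 - a2) >= 0)
          \/ (b1 - a1 > 0 /\ b2 - a2 < 0 /\ b1 - a1 + (b2 - a2) < 0)
          \/ (b1 - a1 <= 0 /\ b2 - a2 <= 0)
          \/ (b1 - a1 < 0 /\ b2 - a2 > 0 /\ b1 - a1 + (b2 - a2) <= 0)
          \/ (b1 - a1 < 0 /\ b2 - a2 > 0 /\ b1 - a1 + (b2 - a2) > 0))%Z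
    as [C|[C|[C|[C|[C|C]]]]] by lia;
  [exists 0%nat, 5%nat|exists 0%nat, 1%nat|exists 2%nat, 1%nat
  |exists 3%nat, 2%nat|exists 3%nat, 4%nat|exists 5%nat, 4%nat];
  unfold nbr, padd, dvec; simpl; repeat split; lia.
Qed.

Definition ray (x : Point) (d k : nat) : Point := Nat.iter k (fun y => nbr y d) x.

Lemma ray_S x d k : ray x d (S k) = nbr (ray x d k) d.
Proof. reflexivity. Qed.

Lemma ray_closed x d k :
  ray x d k = (fst x + Z.of_nat k * fst (dvec d), snd x + Z.of_nat k * snd (dvec d))%Z.
Proof.
  induction k as [|k IH].
  - destruct x; simpl; f_equal; lia.
  - rewrite ray_S, IH. unfold nbr, padd. simpl fst; simpl snd.
    rewrite Nat2Z.inj_succ, !Z.mul_succ_l. f_equal; ring.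
Qed.

Lemma hexdist_ray_away l x : exists d, (d < 6)%nat /\
  forall k, hexdist l (ray x d k) = (hexdist l x + Z.of_nat k)%Z.
Proof.
  destruct l as [a1 a2], x as [b1 b2].
  assert (   (b1 - a1 >= 0 /\ b2 - a2 >= 0) \/ (b1 - a1 > 0 /\ b2 - a2 < 0)
          \/ (b1 - a1 <= 0 /\ b2 - a2 <= 0) \/ (b1 - a1 < 0 /\ b2 - a2 > 0))%Z
    as [C|[C|[C|C]]] by lia;
  [exists 0%nat|exists 1%nat|exists 3%nat|exists 4%nat];
  split; try lia; intro k; rewrite ray_closed; unfold hexdist, dvec; simpl; lia.
Qed.

Lemma hexdist_le_pnorm l x : (hexdist l x <= pnorm l + pnorm x)%Z.
Proof. destruct l, x; unfold hexdist, pnorm; simpl; lia. Qed.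

Lemma walk_hexdist x y n : walk x y n -> (hexdist x y <= Z.of_nat n)%Z.
Proof.
  induction 1 as [x|x y z n Hxy _ IH].
  - rewrite hexdist_refl; lia.
  - pose proof (hexdist_adj z x y Hxy).
    rewrite (hexdist_sym x z), (hexdist_sym y z) in *. lia.
Qed.

Lemma walk_of_hexdist n x y : hexdist x y = Z.of_nat n -> walk x y n.
Proof.
  revert x; induction n as [|n IH]; intros x H.
  - apply hexdist_eq0 in H as ->. constructor.
  - destruct (hexdist_closer x y) as [d [Hd Hc]]; [lia|].
    apply walk_cons with (nbr x d); [apply adj_nbr|]. apply IH. lia.
Qed.

Lemma is_dist_hexdist x y d : is_dist x y d <-> Z.of_nat d = hexdist x y.
Proof.
  split.
  - intros [W Hmin]. pose proof (walk_hexdist _ _ _ W). pose proof (hexdist_ge0 x y).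
    assert (walk x y (Z.to_nat (hexdist x y))) as W' by (apply walk_of_hexdist; lia).
    specialize (Hmin _ W'). lia.
  - intros H. split; [now apply walk_of_hexdist|].
    intros d' W. apply walk_hexdist in W. lia.
Qed.

Lemma path_in_start (S : shape) x y : path_in S x y -> S x.
Proof. now destruct 1. Qed.

Lemma path_in_end (S : shape) x y : path_in S x y -> S y.
Proof. now induction 1. Qed.

Lemma path_in_trans (S : shape) x y z : path_in S x y -> path_in S y z -> path_in S x z.
Proof. induction 1; intros; [assumption|]. eapply path_in_step; eauto. Qed.

Lemma path_in_snoc (S : shape) x y z : path_in S x y -> adj y z -> S z -> path_in S x z.
Proof.
  intros H Ayz Sz. apply path_in_trans with y; [exact H|].
  apply path_in_step with z; [eapply path_in_end; eauto|exact Ayz|now constructor].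
Qed.

Lemma path_in_sym (S : shape) x y : path_in S x y -> path_in S y x.
Proof.
  induction 1; [now constructor|].
  eapply path_in_snoc; eauto using adj_sym.
Qed.

Lemma path_in_mono (S S' : shape) x y :
  (forall z, S z -> S' z) -> path_in S x y -> path_in S' x y.
Proof. intros HS. induction 1; [constructor; auto|eapply path_in_step; eauto]. Qed.

Lemma path_in_first_step (S : shape) x y : path_in S x y -> x <> y ->
  exists z, adj x z /\ S z.
Proof.
  destruct 1 as [|x z y _ Axz H]; [congruence|].
  exists z. split; [exact Axz|eapply path_in_start; eauto].
Qed.

Lemma path_in_hexdist_ivt (S : shape) l x y i : path_in S x y ->
  (hexdist l x <= i <= hexdist l y)%Z -> exists z, S z /\ hexdist l z = i.
Proof.
  induction 1 as [x Sx|x y' z Sx Axy _ IH]; intros Hi.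
  - exists x. split; [exact Sx|lia].
  - destruct (Z.eq_dec (hexdist l x) i) as [E|E]; [now exists x|].
    apply IH. pose proof (hexdist_adj l x y' Axy). lia.
Qed.

Lemma ray_path (S : shape) x d k :
  (forall j, (j <= k)%nat -> S (ray x d j)) -> path_in S x (ray x d k).
Proof.
  induction k as [|k IH]; intros H.
  - constructor. apply (H 0%nat). lia.
  - apply path_in_snoc with (ray x d k).
    + apply IH. intros; apply H; lia.
    + rewrite ray_S. apply adj_nbr.
    + apply H; lia.
Qed.

Lemma connected_ext (S S' : shape) :
  (forall x, S' x <-> S x) -> connected S -> connected S'.
Proof.
  intros E C x y Hx Hy. apply (path_in_mono S); [intros; now apply E|].
  apply C; now apply E.
Qed.

(* A path through v can be rerouted around v inside the (connected) neighbourhood of v. *)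
Lemma path_in_avoid_redundant (S : shape) v x y : redundant S v -> path_in S x y -> y <> v ->
  (x <> v -> path_in (fun z => S z /\ z <> v) x y) /\
  (x = v -> forall w, S w -> adj v w -> path_in (fun z => S z /\ z <> v) w y).
Proof.
  intros R H. induction H as [x Sx|x y' z Sx Axy H IH]; intros Hz.
  - split; [intros; now constructor|intros ->; congruence].
  - destruct (IH Hz) as [IH1 IH2].
    assert (Sy : S y') by (eapply path_in_start; eauto).
    split.
    + intros Hx. destruct (classic (y' = v)) as [->|Hy].
      * apply IH2; auto using adj_sym.
      * eapply path_in_step; eauto.
    + intros -> w Sw Aw.
      assert (Hy : y' <> v) by (intros ->; eapply adj_irrefl; eauto).
      apply path_in_trans with y'; auto.
      apply (path_in_mono (fun z => S z /\ adj v z)).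
      * intros t [St At]. split; [exact St|]. intros ->. eapply adj_irrefl; eauto.
      * apply R; split; auto.
Qed.

Lemma connected_remove_redundant (S : shape) v : connected S -> redundant S v ->
  connected (fun z => S z /\ z <> v).
Proof.
  intros C R x y [Sx Hx] [Sy Hy].
  exact (proj1 (path_in_avoid_redundant S v x y R (C x y Sx Sy) Hy) Hx).
Qed.

(** * Outer face and area *)

Lemma in_outer_face_path_back (S : shape) x y :
  path_in (fun z => ~ S z) x y -> in_outer_face S y -> in_outer_face S x.
Proof.
  intros H [_ F]. split; [exact (path_in_start _ _ _ H)|].
  intro n. destruct (F n) as [r [Hr Hn]]. exists r. split; [eapply path_in_trans; eauto|exact Hn].
Qed.

Lemma in_outer_face_far (S : shape) l r x :
  (forall u, S u -> (hexdist l u <= r)%Z) -> (r < hexdist l x)%Z -> in_outer_face S x.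
Proof.
  intros HS Hx. destruct (hexdist_ray_away l x) as [d [_ Hray]].
  assert (NS : forall k, ~ S (ray x d k)).
  { intros k Hk. apply HS in Hk. rewrite Hray in Hk. lia. }
  split; [exact (NS 0%nat)|].
  intro n. set (k := Z.to_nat (Z.abs n + pnorm l)).
  exists (ray x d k). split; [apply ray_path; intros; apply NS|].
  pose proof (hexdist_le_pnorm l (ray x d k)). rewrite Hray in *.
  pose proof (hexdist_ge0 l x). assert (0 <= pnorm l)%Z by (unfold pnorm; lia). lia.
Qed.

Lemma area_within_radius (S : shape) l r x :
  (forall u, S u -> (hexdist l u <= r)%Z) -> area S x -> (hexdist l x <= r)%Z.
Proof.
  intros HS Hx. destruct (Z_le_gt_dec (hexdist l x) r) as [|Hfar]; [assumption|exfalso].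
  pose proof (in_outer_face_far S l r x HS (Z.gt_lt _ _ Hfar)) as O.
  destruct Hx as [Sx|[_ NO]]; [exact (proj1 O Sx)|exact (NO O)].
Qed.

(* Walking from a hole along a fixed direction, the first point of S is
   reached through holes; if S is never reached the walk escapes to infinity. *)
Lemma area_reaches_shape (S : shape) h : area S h -> exists y, S y /\ path_in (area S) h y.
Proof.
  intros [Sh|[NSh NO]].
  { exists h. split; [exact Sh|]. constructor. now left. }
  destruct (classic (exists k, S (ray h 0 k))) as [Hhit|Hnohit].
  - destruct (dec_inh_nat_subset_has_unique_least_element _ (fun k => classic (S (ray h 0 k))) Hhit)
      as [j [[Sj Hmin] _]].
    assert (Before : forall j', (j' < j)%nat -> ~ S (ray h 0 j')).
    { intros j' Hj' Sj'. specialize (Hmin j' Sj'). lia. }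
    exists (ray h 0 j). split; [exact Sj|].
    destruct j as [|j]; [constructor; now left|].
    apply path_in_snoc with (ray h 0 j); [|rewrite ray_S; apply adj_nbr|now left].
    apply ray_path. intros j' Hj'. right. split; [apply Before; lia|].
    intro O. apply NO. apply (in_outer_face_path_back S h (ray h 0 j')); [|exact O].
    apply ray_path. intros; apply Before; lia.
  - exfalso. apply NO. split; [exact NSh|]. intro n.
    exists (ray h 0 (Z.to_nat (Z.abs n + pnorm h))). split.
    + apply ray_path. intros j _ Hj. apply Hnohit. eauto.
    + rewrite ray_closed. unfold pnorm, dvec. simpl. lia.
Qed.

Lemma area_connected (S : shape) : connected S -> connected (area S).
Proof.
  intros C x y Hx Hy.
  destruct (area_reaches_shape S x Hx) as [x' [Sx Px]].
  destruct (area_reaches_shape S y Hy) as [y' [Sy Py]].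
  apply path_in_trans with x'; [exact Px|].
  apply path_in_trans with y'; [|now apply path_in_sym].
  apply (path_in_mono S); [intros; now left|auto].
Qed.

Lemma area_nbr_of_hole (S : shape) w d : area S w -> ~ S w -> area S (nbr w d).
Proof.
  intros [Sw|[_ NO]] NSw; [contradiction|].
  destruct (classic (S (nbr w d))) as [Sn|NSn]; [now left|right].
  split; [exact NSn|]. intro O. apply NO. apply (in_outer_face_path_back S w (nbr w d)); [|exact O].
  apply path_in_step with (nbr w d); [exact NSw|apply adj_nbr|now constructor].
Qed.

(* A neighbour nbr v d all of whose neighbours lie in Se puts the directions
   d - 1, d, d + 1 at v into Se.  Since an SCE point has three consecutive
   directions outside Se, at most one such neighbour exists. *)
Lemma SCE_two_interior_nbrs (Se : shape) v w u : SCE Se v ->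
  adj v w -> adj v u -> w <> u -> Se w -> Se u ->
  (forall d, Se (nbr w d)) -> (forall d, Se (nbr u d)) -> False.
Proof.
  intros [_ [i [k [[Hi [Hk [Hout _]]] Hk3]]]] [dw [Hdw ->]] [du [Hdu ->]] Hne Sw Su Hw Hu.
  pose proof (Hout 0%nat ltac:(lia)) as O0.
  pose proof (Hout 1%nat ltac:(lia)) as O1.
  pose proof (Hout 2%nat ltac:(lia)) as O2.
  pose proof (Hw (dw + 2)%nat) as W1. rewrite nbr_nbr_succ in W1 by exact Hdw.
  pose proof (Hw (dw + 4)%nat) as W2. rewrite nbr_nbr_pred in W2 by exact Hdw.
  pose proof (Hu (du + 2)%nat) as U1. rewrite nbr_nbr_succ in U1 by exact Hdu.
  pose proof (Hu (du + 4)%nat) as U2. rewrite nbr_nbr_pred in U2 by exact Hdu.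
  clear Hout Hw Hu. destruct v as [v1 v2].
  destruct_dir dw; destruct_dir du; destruct_dir i;
  unfold nbr, dvec, padd in *; simpl in *; tauto.
Qed.

(** * The invariant of Algorithm DLE *)

Lemma peqb_true x y : peqb x y = true -> x = y.
Proof.
  destruct x, y; unfold peqb; simpl. intros H.
  apply andb_prop in H as [H1 H2]. apply Z.eqb_eq in H1, H2. now subst.
Qed.

Section Invariant.

Local Set Implicit Arguments.

(* [A] is instantiated with the area of the initial shape.  [inv_hole] is
   what keeps a particle from expanding out of the outermost layer of S_e. *)
Record dle_inv {Part : Type} (A : shape) (c : Config Part) : Prop := {
  inv_excl : forall p q x, p <> q -> occupies (cf_st c p) x -> occupies (cf_st c q) x -> False;
  inv_tail : forall p x, ps_tail (cf_st c p) = Some x -> ~ cf_Se c x;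
  inv_term : forall p, ps_term (cf_st c p) = true -> ps_tail (cf_st c p) = None;
  inv_undecided : forall p, ps_status (cf_st c p) = Undecided -> cf_Se c (ps_head (cf_st c p));
  inv_elig : forall p d, ps_elig (cf_st c p) d = false -> ~ cf_Se c (nbr (ps_head (cf_st c p)) d);
  inv_conn : connected (cf_Se c);
  inv_hole : forall w, cf_Se c w -> ~ occupied c w -> forall d, cf_Se c (nbr w d);
  inv_occ_area : forall p x, occupies (cf_st c p) x -> A x;
  inv_Se_area : forall x, cf_Se c x -> A x }.

End Invariant.

Lemma dle_inv_initial {Part : Type} (c0 : Config Part) :
  dle_initial c0 -> dle_inv (area (occupied c0)) c0.
Proof.
  intros [Hst [Hinj [_ [_ [Hconn [Helig HSe]]]]]].
  assert (Hocc : forall p x, occupies (cf_st c0 p) x -> x = ps_head (cf_st c0 p)).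
  { intros p x [H|H]; [now symmetry|]. destruct (Hst p) as [Ht _]. congruence. }
  constructor.
  - intros p q x Hpq Hp Hq. apply Hocc in Hp, Hq. apply Hpq, Hinj. congruence.
  - intros p x H. destruct (Hst p) as [Ht _]. congruence.
  - intros p H. now destruct (Hst p) as [? _].
  - intros p _. apply HSe. left. exists p. now left.
  - intros p d H Hs. apply HSe in Hs.
    assert (O : in_outer_face (occupied c0) (nbr (ps_head (cf_st c0 p)) d)).
    { apply NNPP. intro N. apply Helig in N. congruence. }
    destruct Hs as [Hs|[_ Hs]]; [exact (proj1 O Hs)|exact (Hs O)].
  - apply connected_ext with (area (occupied c0)); [exact HSe|now apply area_connected].
  - intros w Hw Hno d. apply HSe. apply HSe in Hw. now apply area_nbr_of_hole.
  - intros p x H. left. now exists p.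
  - intros x H. now apply HSe.
Qed.

(* Particle updates of the steps that leave S_e unchanged. *)
Definition quiet_update (s s' : PState) : Prop :=
  ps_head s' = ps_head s /\ ps_elig s' = ps_elig s /\
  (ps_tail s' = ps_tail s \/ ps_tail s' = None) /\
  (ps_status s' = Undecided -> ps_status s = Undecided) /\
  (ps_term s' = true -> ps_term s = true \/ ps_tail s' = None).

Lemma quiet_update_refl s : quiet_update s s.
Proof. unfold quiet_update; tauto. Qed.

Lemma quiet_update_others {Part : Type} (c c' : Config Part) p :
  others_same c c' p -> quiet_update (cf_st c p) (cf_st c' p) ->
  forall q, quiet_update (cf_st c q) (cf_st c' q).
Proof.
  intros Hoth Hp q. destruct (classic (q = p)) as [->|Hq]; [exact Hp|].
  rewrite (Hoth q Hq). apply quiet_update_refl.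
Qed.

Lemma dle_inv_quiet {Part : Type} A (c c' : Config Part) :
  dle_inv A c -> same_Se c c' -> (forall q, quiet_update (cf_st c q) (cf_st c' q)) ->
  dle_inv A c'.
Proof.
  intros Hinv HSe Hupd. red in HSe.
  assert (Hocc : forall q x, occupies (cf_st c' q) x -> occupies (cf_st c q) x).
  { intros q x. destruct (Hupd q) as [Eh [_ [Et _]]]. unfold occupies.
    rewrite Eh. destruct Et as [->| ->]; intuition discriminate. }
  assert (Hocc_Se : forall x, cf_Se c x -> occupied c x -> occupied c' x).
  { intros x Sx [q [Hx|Hx]].
    - exists q. left. now rewrite (proj1 (Hupd q)).
    - exfalso. exact (inv_tail Hinv q Hx Sx). }
  constructor.
  - intros p q x Hpq Hp Hq. exact (inv_excl Hinv Hpq (Hocc _ _ Hp) (Hocc _ _ Hq)).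
  - intros q x Ht. rewrite HSe. destruct (Hupd q) as [_ [_ [[Et|Et] _]]]; [|congruence].
    rewrite Et in Ht. exact (inv_tail Hinv q Ht).
  - intros q Ht. destruct (Hupd q) as [_ [_ [Et [_ Hterm]]]].
    destruct (Hterm Ht) as [Ht0|]; [|assumption].
    rewrite (inv_term Hinv q Ht0) in Et. tauto.
  - intros q Hs. rewrite HSe. destruct (Hupd q) as [-> [_ [_ [Hst _]]]].
    exact (inv_undecided Hinv q (Hst Hs)).
  - intros q d He. rewrite HSe. destruct (Hupd q) as [-> [Ee _]]. rewrite Ee in He.
    exact (inv_elig Hinv q d He).
  - exact (connected_ext _ _ HSe (inv_conn Hinv)).
  - intros w Hw Hno d. apply HSe. apply HSe in Hw.
    apply (inv_hole Hinv Hw). intro Ho. exact (Hno (Hocc_Se w Hw Ho)).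
  - intros q x Ho. exact (inv_occ_area Hinv q (Hocc _ _ Ho)).
  - intros x Hx. apply HSe in Hx. exact (inv_Se_area Hinv x Hx).
Qed.

(* Particle updates when the point v is removed from S_e. *)
Definition erode_update (v : Point) (s s' : PState) : Prop :=
  ps_head s' = ps_head s /\ ps_tail s' = ps_tail s /\
  (ps_term s' = true -> ps_term s = true) /\
  (ps_status s' = Undecided -> ps_status s = Undecided /\ ps_head s <> v) /\
  (forall d, ps_elig s' d = false -> ps_elig s d = false \/ nbr (ps_head s) d = v).

Lemma forget_point_elig v s d :
  ps_elig (forget_point v s) d = false -> ps_elig s d = false \/ nbr (ps_head s) d = v.
Proof. simpl. destruct (peqb _ v) eqn:E; auto using peqb_true. Qed.

Lemma erode_update_forget v s : ps_head s <> v -> erode_update v s (forget_point v s).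
Proof. intros Hv. repeat split; auto using forget_point_elig. Qed.

Lemma erode_update_occupies v s s' x : erode_update v s s' ->
  occupies s' x <-> occupies s x.
Proof. intros [Eh [Et _]]. unfold occupies. now rewrite Eh, Et. Qed.

Lemma dle_inv_erode {Part : Type} A (c c' : Config Part) v :
  dle_inv A c -> SCE (cf_Se c) v ->
  (forall x, cf_Se c' x <-> cf_Se c x /\ x <> v) ->
  ~ (exists u, adj v u /\ ~ occupied c u /\ cf_Se c' u) ->
  (forall q, erode_update v (cf_st c q) (cf_st c' q)) ->
  dle_inv A c'.
Proof.
  intros Hinv Hsce HSe Hnou Hupd.
  assert (Hocc : forall q x, occupies (cf_st c' q) x <-> occupies (cf_st c q) x)
    by (intros q x; exact (erode_update_occupies _ _ _ x (Hupd q))).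
  assert (Hoccd : forall x, occupied c' x <-> occupied c x)
    by (intros x; split; intros [q Hq]; exists q; apply Hocc; exact Hq).
  constructor.
  - intros p q x Hpq Hp Hq. apply Hocc in Hp, Hq. exact (inv_excl Hinv Hpq Hp Hq).
  - intros q x Ht Hx. apply HSe in Hx as [Hx _]. destruct (Hupd q) as [_ [Et _]].
    rewrite Et in Ht. exact (inv_tail Hinv q Ht Hx).
  - intros q Ht. destruct (Hupd q) as [_ [-> [Hterm _]]]. exact (inv_term Hinv q (Hterm Ht)).
  - intros q Hs. destruct (Hupd q) as [-> [_ [_ [Hst _]]]].
    destruct (Hst Hs) as [Hs0 Hv]. apply HSe. split; [exact (inv_undecided Hinv q Hs0)|exact Hv].
  - intros q d He Hx. apply HSe in Hx as [Hx Hv]. destruct (Hupd q) as [Eh [_ [_ [_ Hel]]]].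
    rewrite Eh in *.
    destruct (Hel d He) as [He0|E]; [exact (inv_elig Hinv q d He0 Hx)|exact (Hv E)].
  - apply (connected_ext _ _ HSe).
    apply connected_remove_redundant; [exact (inv_conn Hinv)|apply Hsce].
  - intros w Hw Hno d. assert (Hw' := Hw). apply HSe in Hw as [Hw _].
    rewrite Hoccd in Hno. apply HSe. split; [exact (inv_hole Hinv Hw Hno d)|].
    intros E. apply Hnou. exists w. split; [rewrite <- E; apply adj_sym, adj_nbr|auto].
  - intros q x Ho. apply Hocc in Ho. exact (inv_occ_area Hinv q Ho).
  - intros x Hx. apply HSe in Hx as [Hx _]. exact (inv_Se_area Hinv x Hx).
Qed.

Lemma dle_inv_move {Part : Type} A (c c' : Config Part) p u :
  let v := ps_head (cf_st c p) in
  dle_inv A c -> ps_tail (cf_st c p) = None -> SCE (cf_Se c) v ->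
  (forall x, cf_Se c' x <-> cf_Se c x /\ x <> v) ->
  adj v u -> ~ occupied c u -> cf_Se c' u ->
  (forall q, q <> p -> erode_update v (cf_st c q) (cf_st c' q)) ->
  cf_st c' p = mkPS u (Some v) Undecided (fun d => negb (peqb (nbr u d) v)) false ->
  dle_inv A c'.
Proof.
  intros v Hinv Ht Hsce HSe Auv Hnu Hu Hupd Hp.
  assert (Hu0 : cf_Se c u /\ u <> v) by now apply HSe.
  assert (Hv_p : occupies (cf_st c p) v) by now left.
  assert (Hocc_p : forall x, occupies (cf_st c' p) x <-> x = u \/ x = v).
  { intros x. rewrite Hp. unfold occupies; simpl. intuition congruence. }
  assert (Hocc_q : forall q x, q <> p -> occupies (cf_st c' q) x <-> occupies (cf_st c q) x)
    by (intros q x Hq; exact (erode_update_occupies _ _ _ x (Hupd q Hq))).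
  assert (Hocc_fwd : forall x, occupied c x -> occupied c' x).
  { intros x [q Hq]. exists q. destruct (classic (q = p)) as [->|Hqp]; [|now apply Hocc_q].
    apply Hocc_p. destruct Hq as [H|H]; [right; now subst|congruence]. }
  assert (Hexcl_p : forall q x, q <> p ->
            occupies (cf_st c' p) x -> occupies (cf_st c' q) x -> False).
  { intros q x Hq Hpx Hqx. apply Hocc_q in Hqx; [|exact Hq].
    apply Hocc_p in Hpx as [-> | ->]; [apply Hnu; now exists q|exact (inv_excl Hinv Hq Hqx Hv_p)]. }
  constructor.
  - intros p1 q1 x Hpq H1 H2.
    destruct (classic (p1 = p)) as [->|H1p]; [exact (Hexcl_p q1 x (not_eq_sym Hpq) H1 H2)|].
    destruct (classic (q1 = p)) as [->|H2p]; [exact (Hexcl_p p1 x Hpq H2 H1)|].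
    apply Hocc_q in H1, H2; [|assumption..]. exact (inv_excl Hinv Hpq H1 H2).
  - intros q x Htq Hx. apply HSe in Hx as [Hx Hxv]. destruct (classic (q = p)) as [->|Hq].
    + rewrite Hp in Htq. simpl in Htq. congruence.
    + destruct (Hupd q Hq) as [_ [Et _]]. rewrite Et in Htq. exact (inv_tail Hinv q Htq Hx).
  - intros q Hterm. destruct (classic (q = p)) as [->|Hq]; [now rewrite Hp in Hterm|].
    destruct (Hupd q Hq) as [_ [-> [Hterm0 _]]]. exact (inv_term Hinv q (Hterm0 Hterm)).
  - intros q Hs. destruct (classic (q = p)) as [->|Hq]; [now rewrite Hp|].
    destruct (Hupd q Hq) as [-> [_ [_ [Hst _]]]]. destruct (Hst Hs) as [Hs0 Hv].
    apply HSe. split; [exact (inv_undecided Hinv q Hs0)|exact Hv].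
  - intros q d He Hx. apply HSe in Hx as [Hx Hxv]. destruct (classic (q = p)) as [->|Hq].
    + rewrite Hp in He, Hx, Hxv. simpl in *.
      destruct (peqb (nbr u d) v) eqn:E; [exact (Hxv (peqb_true _ _ E))|discriminate].
    + destruct (Hupd q Hq) as [Eh [_ [_ [_ Hel]]]]. rewrite Eh in *.
      destruct (Hel d He) as [He0|E]; [exact (inv_elig Hinv q d He0 Hx)|exact (Hxv E)].
  - apply (connected_ext _ _ HSe).
    apply connected_remove_redundant; [exact (inv_conn Hinv)|apply Hsce].
  - intros w Hw Hno d. apply HSe in Hw as [Hw Hwv].
    assert (Hno0 : ~ occupied c w) by (intro Ho; exact (Hno (Hocc_fwd w Ho))).
    assert (Hwu : w <> u) by (intros ->; apply Hno; exists p; apply Hocc_p; now left).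
    apply HSe. split; [exact (inv_hole Hinv Hw Hno0 d)|]. intros E.
    apply (SCE_two_interior_nbrs (cf_Se c) v w u Hsce); try tauto.
    + rewrite <- E. apply adj_sym, adj_nbr.
    + exact (inv_hole Hinv Hw Hno0).
    + exact (inv_hole Hinv (proj1 Hu0) Hnu).
  - intros q x Ho. destruct (classic (q = p)) as [->|Hq].
    + apply Hocc_p in Ho as [-> | ->];
        [exact (inv_Se_area Hinv u (proj1 Hu0))|exact (inv_occ_area Hinv p Hv_p)].
    + apply Hocc_q in Ho; [exact (inv_occ_area Hinv q Ho)|exact Hq].
  - intros x Hx. apply HSe in Hx as [Hx _]. exact (inv_Se_area Hinv x Hx).
Qed.

Lemma dle_inv_step {Part : Type} A (c c' : Config Part) p :
  dle_inv A c -> dle_step c p c' -> dle_inv A c'.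
Proof.
  intros Hinv H.
  assert (Hhead : forall q, q <> p -> ps_head (cf_st c q) <> ps_head (cf_st c p)).
  { intros q Hq E. apply (inv_excl Hinv Hq (or_introl E)). now left. }
  destruct H as [Hterm Hc | t Hterm Ht Hoth HSe Hp | Hterm Ht Hdec Hnb Hoth HSe Hp
                | Hterm Ht Hdec Hnb Hc | Hterm Ht Hund Hel Hoth HSe Hp
                | u v Hterm Ht Hund Hel Hsce HSe Auv Hnu Hu Hq Hp
                | v Hterm Ht Hund Hel Hsce HSe Hnou Hq Hp | Hterm Ht Hund Hel Hsce Hc];
    try (subst; exact Hinv);
    try (apply (dle_inv_quiet A c c' Hinv HSe), (quiet_update_others c c' p Hoth);
         unfold quiet_update; rewrite Hp; simpl; intuition discriminate).
  - apply (dle_inv_move A c c' p u Hinv Ht Hsce HSe Auv Hnu Hu); [|exact Hp].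
    intros q Hqp. rewrite (Hq q Hqp). exact (erode_update_forget v _ (Hhead q Hqp)).
  - apply (dle_inv_erode A c c' v Hinv Hsce HSe Hnou). intros q.
    destruct (classic (q = p)) as [->|Hqp].
    + rewrite Hp. split; [reflexivity|]. split; [now rewrite Ht|].
      split; [discriminate|]. split; [discriminate|].
      exact (forget_point_elig v (mkPS v None Follower (ps_elig (cf_st c p)) false)).
    + rewrite (Hq q Hqp). exact (erode_update_forget v _ (Hhead q Hqp)).
Qed.

Lemma step_other {Part : Type} (c c' : Config Part) p q : dle_step c p c' -> q <> p ->
  ps_head (cf_st c' q) = ps_head (cf_st c q) /\ ps_status (cf_st c' q) = ps_status (cf_st c q).
Proof.
  intros H Hq. destruct H; unfold others_same in *; subst; auto;
    match goal with Hoth : forall q, q <> p -> cf_st c' q = _ |- _ => rewrite (Hoth q Hq) end;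
    auto.
Qed.

Lemma step_decided {Part : Type} (c c' : Config Part) p q : dle_step c p c' ->
  decided (cf_st c q) ->
  ps_head (cf_st c' q) = ps_head (cf_st c q) /\ ps_status (cf_st c' q) = ps_status (cf_st c q).
Proof.
  intros H Hd. destruct (classic (q = p)) as [->|Hq].
  - destruct H; subst; auto; try contradiction;
      match goal with Hp : cf_st c' p = _ |- _ => now rewrite Hp end.
  - exact (step_other c c' p q H Hq).
Qed.

Lemma step_leader {Part : Type} (c c' : Config Part) p : dle_step c p c' ->
  ps_status (cf_st c p) <> Leader -> ps_status (cf_st c' p) = Leader ->
  ps_status (cf_st c p) = Undecided /\ (forall d, (d < 6)%nat -> ps_elig (cf_st c p) d = false) /\
  ps_head (cf_st c' p) = ps_head (cf_st c p).
Proof.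
  intros H Hn Hl. destruct H; subst; try congruence;
    match goal with Hp : cf_st c' p = _ |- _ => rewrite Hp in Hl; rewrite Hp end;
    simpl in *; try congruence; auto.
Qed.

Lemma step_Se {Part : Type} (c c' : Config Part) p : dle_step c p c' ->
  same_Se c c' \/
  (let v := ps_head (cf_st c p) in
   (forall x, cf_Se c' x <-> cf_Se c x /\ x <> v) /\
   ((exists u, adj v u /\ ~ occupied c u /\ cf_Se c' u) \/
    (ps_status (cf_st c' p) = Follower /\ ps_head (cf_st c' p) = v))).
Proof.
  intros H. destruct H; subst; try (left; assumption); try (left; intro; reflexivity).
  - right. split; [assumption|]. left. now exists u.
  - right. split; [assumption|]. right.
    match goal with Hp : cf_st c' p = _ |- _ => now rewrite Hp end.
Qed.

Lemma Se_singleton_of_no_eligible {Part : Type} A (c : Config Part) p : dle_inv A c ->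
  ps_status (cf_st c p) = Undecided -> (forall d, (d < 6)%nat -> ps_elig (cf_st c p) d = false) ->
  forall x, cf_Se c x <-> x = ps_head (cf_st c p).
Proof.
  intros Hinv Hund Hel x. split; [|intros ->; exact (inv_undecided Hinv p Hund)].
  intros Hx. apply NNPP. intros Hne.
  pose proof (inv_conn Hinv _ _ (inv_undecided Hinv p Hund) Hx) as Hpath.
  destruct (path_in_first_step _ _ _ Hpath (not_eq_sym Hne)) as [y [[d [Hd ->]] Hy]].
  exact (inv_elig Hinv p d (Hel d Hd) Hy).
Qed.

(* The only point of Se at distance >= i from l sits at distance i; a
   neighbour u inside the ball then has two neighbours at distance i. *)
Lemma far_point_nbr_not_interior (Se : shape) l v u i :
  (forall x, Se x -> (i <= hexdist l x)%Z -> x = v) -> hexdist l v = i ->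
  adj v u -> u <> v -> Se u -> ~ (forall d, Se (nbr u d)).
Proof.
  intros Hfar Hv Auv Huv Su Hint.
  pose proof (hexdist_adj l v u Auv) as Hvu.
  destruct (Z_le_gt_dec i (hexdist l u)) as [Hui|Hui]; [exact (Huv (Hfar u Su Hui))|].
  destruct (hexdist_two_farther l u) as [d1 [d2 [Hd1 [Hd2 [Hne [H1 H2]]]]]].
  apply Hne, (nbr_inj u); [assumption..|].
  rewrite (Hfar _ (Hint d1)), (Hfar _ (Hint d2)); [reflexivity|lia|lia].
Qed.

Lemma step_across_layer {Part : Type} A (c c' : Config Part) p l i :
  dle_inv A c -> dle_step c p c' -> cf_Se c' l ->
  (exists x, cf_Se c x /\ (i <= hexdist l x)%Z) ->
  (forall x, cf_Se c' x -> (hexdist l x < i)%Z) ->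
  ps_status (cf_st c' p) = Follower /\ hexdist l (ps_head (cf_st c' p)) = i.
Proof.
  intros Hinv H Hl [x0 [Hx0 Hix0]] Hin.
  destruct (step_Se c c' p H) as [E|[E Cases]].
  { specialize (Hin x0 (proj2 (E x0) Hx0)). lia. }
  set (v := ps_head (cf_st c p)) in *.
  assert (Hfar : forall x, cf_Se c x -> (i <= hexdist l x)%Z -> x = v).
  { intros x Hx Hix. apply NNPP. intro Hxv. specialize (Hin x (proj2 (E x) (conj Hx Hxv))). lia. }
  assert (Hv : hexdist l v = i).
  { assert (Hl0 : cf_Se c l) by now apply E.
    pose proof (Hin l Hl) as Hli. rewrite hexdist_refl in Hli.
    destruct (path_in_hexdist_ivt _ l l x0 i (inv_conn Hinv l x0 Hl0 Hx0)) as [y [Hy Hyi]].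
    { rewrite hexdist_refl. lia. }
    rewrite <- (Hfar y Hy ltac:(lia)). exact Hyi. }
  destruct Cases as [[u [Auv [Hnu Hu]]]|[Hf Hh]].
  - exfalso. apply E in Hu as [Hu Huv].
    exact (far_point_nbr_not_interior _ l v u i Hfar Hv Auv Huv Hu (inv_hole Hinv Hu Hnu)).
  - rewrite Hh. now split.
Qed.

(** * Executions *)

Lemma exists_exit_step (P : nat -> Prop) n : P 0%nat -> ~ P n ->
  exists s, (s < n)%nat /\ P s /\ ~ P (S s).
Proof.
  intros H0. induction n as [|n IH]; intros Hn; [contradiction|].
  destruct (classic (P n)) as [Hp|Hp]; [exists n; auto|].
  destruct (IH Hp) as [s [? ?]]. exists s. split; [lia|assumption].
Qed.

Section Execution.

Variables (Part : Type) (c : nat -> Config Part) (a : nat -> Part).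
Hypothesis Hinit : dle_initial (c 0%nat).
Hypothesis Hexec : dle_execution c a.

Lemma dle_inv_exec n : dle_inv (area (occupied (c 0%nat))) (c n).
Proof.
  induction n as [|n IH]; [exact (dle_inv_initial _ Hinit)|].
  exact (dle_inv_step _ _ _ _ IH (Hexec n)).
Qed.

Lemma decided_stable q n m : (n <= m)%nat -> decided (cf_st (c n) q) ->
  ps_head (cf_st (c m) q) = ps_head (cf_st (c n) q) /\
  ps_status (cf_st (c m) q) = ps_status (cf_st (c n) q).
Proof.
  intros Hnm Hd. induction Hnm as [|m _ [Eh Es]]; [now split|].
  assert (Hdm : decided (cf_st (c m) q)) by (unfold decided in *; congruence).
  destruct (step_decided _ _ _ q (Hexec m) Hdm). split; congruence.
Qed.

Lemma Se_antitone n m x : (n <= m)%nat -> cf_Se (c m) x -> cf_Se (c n) x.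
Proof.
  induction 1 as [|m _ IH]; [tauto|]. intros Hx. apply IH.
  destruct (step_Se _ _ _ (Hexec m)) as [E|[E _]]; apply E in Hx; tauto.
Qed.

(* When the leader is elected, its eligible entries are all false, so
   S_e has already shrunk to its point. *)
Lemma election_time T pl : ps_status (cf_st (c T) pl) = Leader ->
  exists s, (s <= T)%nat /\ forall x, cf_Se (c s) x <-> x = ps_head (cf_st (c T) pl).
Proof.
  intros Hl.
  destruct (exists_exit_step (fun n => ps_status (cf_st (c n) pl) <> Leader) T)
    as [s [HsT [Hs Hs']]]; [|tauto|].
  { destruct Hinit as [Hst _]. destruct (Hst pl) as [_ [-> _]]. discriminate. }
  apply NNPP in Hs'.
  assert (Hact : a s = pl).
  { apply NNPP. intro Hn. destruct (step_other _ _ _ pl (Hexec s)) as [_ E]; congruence. }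
  assert (Hstep := Hexec s). rewrite Hact in Hstep.
  destruct (step_leader _ _ pl Hstep Hs Hs') as [Hund [Hel Eh]].
  destruct (decided_stable pl (S s) T) as [EhT _]; [lia|unfold decided; congruence|].
  exists s. split; [lia|]. rewrite EhT, Eh.
  exact (Se_singleton_of_no_eligible _ _ pl (dle_inv_exec s) Hund Hel).
Qed.

(* Consider the first step after which S_e lies in the open ball of radius i. *)
Lemma layer_has_follower s l i : (0 < i)%Z ->
  (forall x, cf_Se (c s) x <-> x = l) ->
  (exists x, occupied (c 0%nat) x /\ (i <= hexdist l x)%Z) ->
  exists n q, (n < s)%nat /\ ps_status (cf_st (c (S n)) q) = Follower /\
              hexdist l (ps_head (cf_st (c (S n)) q)) = i.
Proof.
  intros Hi Hs [x0 [Hx0 Hix0]].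
  set (Q := fun m => exists x, cf_Se (c m) x /\ (i <= hexdist l x)%Z).
  destruct (exists_exit_step Q s) as [n [Hns [Qn NQn]]].
  - exists x0. split; [|exact Hix0].
    destruct Hinit as [_ [_ [_ [_ [_ [_ HSe0]]]]]]. apply HSe0. now left.
  - intros [x [Hx Hix]]. apply Hs in Hx as ->. rewrite hexdist_refl in Hix. lia.
  - assert (Hl : cf_Se (c (S n)) l) by (apply (Se_antitone (S n) s); [lia|now apply Hs]).
    destruct (step_across_layer _ _ _ _ l i (dle_inv_exec n) (Hexec n) Hl Qn) as [Hf Hd].
    { intros x Hx. apply Z.nle_gt. intro Hix. apply NQn. now exists x. }
    now exists n, (a n).
Qed.

End Execution.

Theorem lemma4p10 (Part : Type) (c : nat -> Config Part) (a : nat -> Part) :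
  dle_initial (c 0%nat) ->
  dle_execution c a ->
  fair a ->
  forall (T : nat) (pl : Part),
    terminated (c T) ->
    ps_status (cf_st (c T) pl) = Leader ->
    forall e : nat,
      eccentricity (occupied (c 0%nat)) (ps_head (cf_st (c T) pl)) e ->
      (forall i : nat, (i <= e)%nat ->
         exists q : Part, ps_tail (cf_st (c T) q) = None /\
                          is_dist (ps_head (cf_st (c T) pl)) (ps_head (cf_st (c T) q)) i) /\
      (forall (x : Point) (d : nat), occupied (c T) x ->
         is_dist (ps_head (cf_st (c T) pl)) x d -> (d <= e)%nat).
Proof.
  intros Hinit Hexec _ T pl Hterm Hlead e [[u0 [Su0 Du0]] Hecc].
  set (l := ps_head (cf_st (c T) pl)) in *.
  pose proof (dle_inv_exec Part c a Hinit Hexec T) as Hinv.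
  apply is_dist_hexdist in Du0.
  assert (Hball : forall u, occupied (c 0%nat) u -> (hexdist l u <= Z.of_nat e)%Z).
  { intros u Su. pose proof (hexdist_ge0 l u).
    assert (D : is_dist l u (Z.to_nat (hexdist l u))) by (apply is_dist_hexdist; lia).
    specialize (Hecc u _ Su D). lia. }
  split.
  - intros [|i] Hi.
    { exists pl. split; [exact (inv_term Hinv pl (Hterm pl))|].
      apply is_dist_hexdist. now rewrite hexdist_refl. }
    destruct (election_time Part c a Hinit Hexec T pl Hlead) as [s [HsT Hs]].
    destruct (layer_has_follower Part c a Hinit Hexec s l (Z.of_nat (S i)))
      as [n [q [Hns [Hf Hd]]]]; [lia|exact Hs|exists u0; split; [exact Su0|lia]|].
    destruct (decided_stable Part c a Hexec q (S n) T) as [Eh _]; [lia|unfold decided; congruence|].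
    exists q. split; [exact (inv_term Hinv q (Hterm q))|].
    apply is_dist_hexdist. rewrite Eh. lia.
  - intros x d [q Hq] Hd. apply is_dist_hexdist in Hd.
    pose proof (area_within_radius _ l _ x Hball (inv_occ_area Hinv q Hq)). lia.
Qed.
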